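(* Consider the problem and algorithm AC2CD described in the context (including the additional requirement on $A^{k,i}$). For every stationary point $x^*$ and every inner iteration $(k,i)$, \[ g^{k,i}\bigl(x^*_{p^k_i}-z^{k,i+1}_{p^k_i}\bigr)\le \max\Bigl\{\frac1{A_l},\frac{L^{\max}}{2\delta(1-\gamma)}\Bigr\}\,\bigl|z^{k,i+1}_{p^k_i}-z^{k,i}_{p^k_i}\bigr|\,\bigl|x^*_{p^k_i}-z^{k,i+1}_{p^k_i}\bigr|. \]
   Context: Problem: minimize $f(x)$ subject to $e^T x = b$ and $l_i \le x_i \le u_i$ ($i=1,\dots,n$), where $n\ge 2$, $e$ is the all-ones vector, $b\in\mathbb{R}$, $l_i\in\mathbb{R}\cup\{-\infty\}$, $u_i\in\mathbb{R}\cup\{+\infty\}$, $l_i<u_i$, and $f:\mathbb{R}^n\to\mathbb{R}$ is continuously differentiable with $\nabla f$ Lipschitz continuous on $\mathbb{R}^n$. $\mathcal F$ is the feasible set, $e_i$ the $i$th unit vector. For $i\ne j$, $L_{i,j}>0$ are fixed constants such that for every $x\in\mathbb{R}^n$ and $s,t\in\mathbb{R}$, $|\nabla f(x+s(e_i-e_j))^T(e_i-e_j)-\nabla f(x+t(e_i-e_j))^T(e_i-e_j)|\le L_{i,j}|s-t|$; $L_{i,i}=0$; $L^{\max}=\max_{i,j}L_{i,j}$. For $x\in\mathcal F$, $D_h(x)=\min\{x_h-l_h,u_h-x_h\}$. A point $x^*\in\mathcal F$ is stationary iff there is $\lambda^*\in\mathbb{R}$ with $\nabla_i f(x^* )\ge\lambda^*$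 if $x^*_i=l_i$, $=\lambda^*$ if $l_i<x^*_i<u_i$, $\le\lambda^*$ if $x^*_i=u_i$. Algorithm AC2CD with parameters $\tau\in(0,1]$, $\gamma,\delta\in(0,1)$, $0<A_l\le A_u<\infty$ and starting point $x^0\in\mathcal F$: for $k=0,1,2,\dots$: let $D^k=\max_h D_h(x^k)$; choose $j(k)$ with $D_{j(k)}(x^k)\ge\tau D^k$; choose a permutation $(p^k_1,\dots,p^k_n)$ of $\{1,\dots,n\}$; set $z^{k,1}=x^k$; for $i=1,\dots,n$ (inner iteration $(k,i)$): $g^{k,i}=\nabla_{j(k)}f(z^{k,i})-\nabla_{p^k_i}f(z^{k,i})$, $d^{k,i}=g^{k,i}(e_{p^k_i}-e_{j(k)})$; $\bar\alpha^{k,i}=\min\{u_{p^k_i}-z^{k,i}_{p^k_i},z^{k,i}_{j(k)}-l_{j(k)}\}/g^{k,i}$ if $g^{k,i}>0$, $=\min\{z^{k,i}_{p^k_i}-l_{p^k_i},u_{j(k)}-z^{k,i}_{j(k)}\}/|g^{k,i}|$ if $g^{k,i}<0$, $=0$ if $g^{k,i}=0$; choose $A^{k,i}\in[A_l,A_u]$, set $\Delta^{k,i}=\min\{\bar\alpha^{k,i},A^{k,i}\}$; starting from $\alpha=\Delta^{k,i}$, while $f(z^{k,i}+\alpha d^{k,i})>f(z^{k,i})+\gamma\alpha\nabla f(z^{k,i})^Td^{k,i}$ replace $\alpha$ by $\delta\alpha$; $\alpha^{k,i}$ is the final $\alpha$ and $z^{k,i+1}=z^{k,i}+\alpha^{k,i}d^{k,i}$.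 Then $x^{k+1}=z^{k,n+1}$. Additional requirement: the values $A^{k,i}\in[A_l,A_u]$ are chosen so that $l_{j(k)}<z^{k,i}_{j(k)}<u_{j(k)}$ for all $k\ge0$ and $i=1,\dots,n+1$. Standing assumptions: $\mathcal L_0=\{x\in\mathcal F: f(x)\le f(x^0)\}$ is nonempty and compact, and every $x\in\mathcal L_0$ has some index $i$ with $l_i<x_i<u_i$. *)

From HB Require Import structures.
From mathcomp Require Import all_boot all_order all_algebra all_fingroup.
From mathcomp Require Import all_classical all_reals all_analysis.
Set Implicit Arguments. Unset Strict Implicit. Unset Printing Implicit Defensive.
Import Order.TTheory GRing.Theory Num.Theory.
Import numFieldNormedType.Exports.
Local Open Scope ring_scope.

Section AC2CD.
Variables (R : realType) (n : nat).

Definition uvec (i : 'I_n) : 'rV[R]_n := delta_mx 0 i.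

Definition grad (f : 'rV[R]_n -> R) (x : 'rV[R]_n) : 'rV[R]_n :=
  \row_h ('D_(uvec h) f x).

Definition dot (v w : 'rV[R]_n) : R := \sum_(h < n) v 0 h * w 0 h.

Definition feasible (l u : 'I_n -> \bar R) (b : R) (x : 'rV[R]_n) : Prop :=
  \sum_(h < n) x 0 h = b /\ forall h, (l h <= (x 0 h)%:E <= u h)%E.

Definition stationary (f : 'rV[R]_n -> R) (l u : 'I_n -> \bar R) (b : R)
  (xs : 'rV[R]_n) : Prop :=
  feasible l u b xs /\
  exists lam : R, forall h,
    ((xs 0 h)%:E = l h -> grad f xs 0 h >= lam) /\
    ((l h < (xs 0 h)%:E < u h)%E -> grad f xs 0 h = lam) /\
    ((xs 0 h)%:E = u h -> grad f xs 0 h <= lam).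

Definition Dh (l u : 'I_n -> \bar R) (x : 'rV[R]_n) (h : 'I_n) : \bar R :=
  Order.min ((x 0 h)%:E - l h)%E (u h - (x 0 h)%:E)%E.

Definition Dmax (l u : 'I_n -> \bar R) (x : 'rV[R]_n) : \bar R :=
  (\big[Order.max/-oo]_(h < n) Dh l u x h)%E.

Definition gdir (f : 'rV[R]_n -> R) (z : 'rV[R]_n) (j p : 'I_n) : R :=
  grad f z 0 j - grad f z 0 p.

Definition ddir (f : 'rV[R]_n -> R) (z : 'rV[R]_n) (j p : 'I_n) : 'rV[R]_n :=
  gdir f z j p *: (uvec p - uvec j).

(* maximal feasible stepsize \bar alpha (possibly +oo) *)
Definition abar (f : 'rV[R]_n -> R) (l u : 'I_n -> \bar R) (z : 'rV[R]_n)
  (j p : 'I_n) : \bar R :=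
  let g := gdir f z j p in
  if 0 < g then
    (Order.min (u p - (z 0 p)%:E) ((z 0 j)%:E - l j) * (g^-1)%:E)%E
  else if g < 0 then
    (Order.min ((z 0 p)%:E - l p) (u j - (z 0 j)%:E) * (`|g|^-1)%:E)%E
  else 0%E.

(* Delta = min{abar, A} (finite since A is finite) *)
Definition Delta (f : 'rV[R]_n -> R) (l u : 'I_n -> \bar R) (z : 'rV[R]_n)
  (j p : 'I_n) (A : R) : R :=
  fine (Order.min (abar f l u z j p) A%:E).

(* Armijo acceptance test (the negation of the while-condition) *)
Definition armijo (f : 'rV[R]_n -> R) (gamma : R) (z d : 'rV[R]_n) (a : R)
  : Prop :=
  f (z + a *: d) <= f z + gamma * a * dot (grad f z) d.

Definition linesearch (f : 'rV[R]_n -> R) (gamma delta : R) (z d : 'rV[R]_n)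
  (Dl a : R) : Prop :=
  exists m : nat, a = delta ^+ m * Dl /\ armijo f gamma z d a /\
    forall m' : nat, (m' < m)%N -> ~ armijo f gamma z d (delta ^+ m' * Dl).

(* A run of AC2CD.  Inner iterations are 0-based: inner iteration (k,i+1) of
   the paper is (k,i) with i : 'I_n, and z k i (i = 0..n) is z^{k,i+1} of the
   paper; so z k 0 = x^k and x^{k+1} = z k n. *)
Definition AC2CD_run (f : 'rV[R]_n -> R) (l u : 'I_n -> \bar R)
  (tau gamma delta Al Au : R)
  (x : nat -> 'rV[R]_n) (jk : nat -> 'I_n) (p : nat -> {perm 'I_n})
  (A : nat -> nat -> R) (alpha : nat -> nat -> R)
  (z : nat -> nat -> 'rV[R]_n) : Prop :=
  (forall k, z k 0%N = x k) /\
  (forall k, x k.+1 = z k n) /\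
  (forall k, (tau%:E * Dmax l u (x k) <= Dh l u (x k) (jk k))%E) /\
  (forall k (i : 'I_n), Al <= A k i <= Au) /\
  (forall k (i : 'I_n),
     linesearch f gamma delta (z k i) (ddir f (z k i) (jk k) (p k i))
       (Delta f l u (z k i) (jk k) (p k i) (A k i)) (alpha k i)) /\
  (forall k (i : 'I_n),
     z k i.+1 = z k i + alpha k i *: ddir f (z k i) (jk k) (p k i)).

End AC2CD.
Arguments uvec {R n}.

(* Write q = p^k_i, j = j(k), g = g^{k,i} and a = alpha^{k,i}.  The inner step
   moves coordinate q by a g, so it suffices to show that g (x*_q - z^{k,i+1}_q)
   <= 0 or 1 <= M a, where M is the constant of the statement.  If the line
   search accepts Delta^{k,i} at once, then either Delta^{k,i} = A^{k,i} >= A_l,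
   or the step stops at a bound; by the additional requirement this is not a
   bound of coordinate j, so z^{k,i+1}_q is the bound of coordinate q in the
   direction of g, and the feasibility of x* gives the sign condition.  If it
   backtracks, the Armijo test fails at a / delta, and the descent lemma along
   e_q - e_j with constant L_{q,j} forces a / delta > 2 (1 - gamma) / L_{q,j}.
   Delta^{k,i} >= 0 needs every iterate to be feasible, which holds by
   induction. *)

From HB Require Import structures.
From mathcomp Require Import all_boot all_order all_algebra all_fingroup.
From mathcomp Require Import all_classical all_reals all_analysis.
From mathcomp Require Import ring lra.
Set Implicit Arguments.
Unset Strict Implicit.
Unset Printing Implicit Defensive.
Import Order.TTheory GRing.Theory Num.Theory.
Import numFieldNormedType.Exports.
Local Open Scope classical_set_scope.
Local Open Scope ring_scope.

Section Dot.
Variables (R : realType) (n : nat).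
Implicit Types (v w : 'rV[R]_n) (c : R).

Lemma dot_uvec w h : dot w (uvec h) = w 0 h.
Proof.
rewrite /dot (bigD1 h) //= big1 ?addr0 => [|k /negbTE kh]; rewrite /uvec mxE.
  by rewrite !eqxx mulr1.
by rewrite kh andbF mulr0.
Qed.

Lemma dotB w v1 v2 : dot w (v1 - v2) = dot w v1 - dot w v2.
Proof. by rewrite /dot -sumrB; apply: eq_bigr => h _; rewrite !mxE mulrBr. Qed.

Lemma dotZ w v c : dot w (c *: v) = c * dot w v.
Proof. by rewrite /dot mulr_sumr; apply: eq_bigr => h _; rewrite !mxE mulrCA. Qed.

End Dot.

Section Descent.
Variables (R : realType) (n : nat) (f : 'rV[R]_n -> R).
Hypothesis df : forall w, differentiable f w.
Implicit Types (y v w d : 'rV[R]_n) (s t Lc gamma : R).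

Definition lipschitz_along (y v : 'rV[R]_n) (Lc : R) : Prop :=
  forall s t : R, `|dot (grad f (y + s *: v)) v - dot (grad f (y + t *: v)) v|
    <= Lc * `|s - t|.

Lemma lipschitz_along_scale y v g Lc :
  lipschitz_along y v Lc -> lipschitz_along y (g *: v) (g ^+ 2 * Lc).
Proof.
move=> hL s t; rewrite !dotZ !scalerA -mulrBr normrM.
have -> : g ^+ 2 * Lc * `|s - t| = `|g| * (Lc * `|s * g - t * g|).
  by rewrite -mulrBl normrM -(real_normK (num_real g)); ring.
by apply: ler_wpM2l; [exact: normr_ge0 | exact: hL].
Qed.

Lemma dot_grad w v : dot (grad f w) v = 'd f w v.
Proof.
rewrite {2}(row_sum_delta v) linear_sum /dot; apply: eq_bigr => h _.
by rewrite linearZ /= mxE -deriveE // mulrC.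
Qed.

Lemma is_derive_along y v t :
  is_derive t 1 (fun s => f (y + s *: v)) (dot (grad f (y + t *: v)) v).
Proof.
have shiftE : (fun h : R => h^-1 *: (((fun s => f (y + s *: v)) \o shift t) (h *: 1)
                                   - f (y + t *: v)))
  = (fun h : R => h^-1 *: ((f \o shift (y + t *: v)) (h *: v) - f (y + t *: v))).
  apply/funext => h /=; congr (_ *: (f _ - _)).
  by rewrite /shift /= -[h%:A]/(h * 1) mulr1 scalerDl addrCA addrA.
rewrite dot_grad; apply: DeriveDef.
  by rewrite /derivable shiftE; exact: diff_derivable.
by rewrite /derive shiftE -/(derive f (y + t *: v) v) deriveE.
Qed.

Lemma descent_lemma y v Lc : lipschitz_along y v Lc ->
  forall s, f (y + s *: v) <= f y + s * dot (grad f y) v + Lc / 2 * s ^+ 2.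
Proof.
move=> hL s; set c := dot (grad f y) v.
pose psi t := dot (grad f (y + t *: v)) v.
(* [h] is written point-free so that the [is_derive] instances apply. *)
pose h : R -> R := (fun t => f (y + t *: v)) - c *: (@id R)
                   - (Lc / 2) *: ((@id R) * (@id R)).
have hE t : h t = f (y + t *: v) - t * c - Lc / 2 * t ^+ 2.
  by rewrite /h !fctE /= expr2; congr (_ - _ - _); exact: mulrC.
have h'E t : is_derive t 1 h (psi t - c - Lc * t).
  apply: is_derive_eq; first by do 2 apply: is_deriveB; exact: is_derive_along.
  by rewrite /psi -[c%:A]/(c * 1) -[(id t)%:A]/(t * 1) -[(Lc / 2) *: _]/(Lc / 2 * _) !mulr1; field.
have hcont a b : {within `[a, b], continuous h}.
  by apply: derivable_within_continuous => t _; case: (h'E t).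
have psi_dev t : - (Lc * `|t|) <= psi t - c <= Lc * `|t|.
  by rewrite -ler_norml; have := hL t 0; rewrite subr0 scale0r addr0.
suff : h s <= h 0 by rewrite !hE scale0r addr0 mul0r expr0n /= mulr0 !subr0; lra.
case: (ltgtP s 0) => [s_lt0|s_gt0|->] //.
- have [t /[1!in_itv] /= /andP [st t0] mvt] := MVT s_lt0 (fun t _ => h'E t) (hcont s 0).
  by have := psi_dev t; rewrite ltr0_norm //; nra.
- have [t /[1!in_itv] /= /andP [t0 ts] mvt] := MVT s_gt0 (fun t _ => h'E t) (hcont 0 s).
  by have := psi_dev t; rewrite gtr0_norm //; nra.
Qed.

Lemma armijo_fail_step_lb gamma y d Lc t : lipschitz_along y d Lc ->
  0 < t -> ~ armijo f gamma y d t ->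
  2 * (1 - gamma) * - dot (grad f y) d < Lc * t.
Proof.
move=> hL t_gt0 /negP; rewrite -ltNge => fail.
have := lt_le_trans fail (descent_lemma hL t).
rewrite -(ltr_pM2r t_gt0); set c := dot _ _; nra.
Qed.

End Descent.

Lemma fine_min_scale (R : realType) (e : \bar R) (G Av D : R) :
  (0 <= e)%E -> 0 < G -> 0 < Av ->
  D = fine (Order.min (e * (G^-1)%:E) Av%:E)%E ->
  [/\ 0 <= D, ((D * G)%:E <= e)%E & D = Av \/ (e <= (D * G)%:E)%E].
Proof.
case: e => [r| |] //=; rewrite ?lee_fin => e_ge0 G_gt0 Av_gt0 ->.
- rewrite -EFinM -EFin_min /=.
  have [le_rAv|lt_Avr] := leP (r * G^-1) Av.
    by rewrite divfK ?gt_eqF //; split; [rewrite divr_ge0 // ltW | | right].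
  by split; [exact: ltW | rewrite -ler_pdivlMr // ltW | left].
- rewrite gt0_mulye ?lte_fin ?invr_gt0 // min_r ?leey //=.
  by split; [exact: ltW | | left].
Qed.

Lemma EFin_between_segment (R : realType) (lo hi : \bar R) (c t s : R) :
  0 <= s <= 1 -> (lo <= c%:E <= hi)%E -> (lo <= (c + t)%:E <= hi)%E ->
  (lo <= (c + s * t)%:E <= hi)%E.
Proof.
move=> /andP[s_ge0 s_le1] /andP[lo_c c_hi] /andP[lo_ct ct_hi].
have [t_ge0|t_lt0] := leP 0 t; apply/andP; split.
- by apply: le_trans lo_c _; rewrite lee_fin; nra.
- by apply: le_trans ct_hi; rewrite lee_fin; nra.
- by apply: le_trans lo_ct _; rewrite lee_fin; nra.
- by apply: le_trans c_hi; rewrite lee_fin; nra.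
Qed.

Section Step.
Variables (R : realType) (n : nat) (f : 'rV[R]_n -> R) (l u : 'I_n -> \bar R).
Implicit Types (z v : 'rV[R]_n) (j q h : 'I_n) (a Av D gamma delta : R).

Lemma gdir_swap z j q : gdir f z q j = - gdir f z j q.
Proof. by rewrite /gdir opprB. Qed.

Lemma Delta_swap z j q Av : Delta f l u z q j Av = Delta f l u z j q Av.
Proof.
rewrite /Delta /abar gdir_swap oppr_gt0 oppr_lt0 normrN.
have [g_gt0|g_lt0|//] := ltgtP 0 (gdir f z j q).
  by rewrite gtr0_norm // (minC ((z 0 j)%:E - l j)%E).
by rewrite ltr0_norm // (minC (u j - (z 0 j)%:E)%E).
Qed.

Lemma step_coord z j q a h :
  (z + a *: ddir f z j q) 0 h = z 0 h + a * gdir f z j q * ((h == q)%:R - (h == j)%:R).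
Proof. by rewrite /ddir /uvec !mxE mulrA. Qed.

Lemma dot_grad_ddir z j q : dot (grad f z) (ddir f z j q) = - gdir f z j q ^+ 2.
Proof. by rewrite /ddir dotZ dotB !dot_uvec /gdir !mxE; ring. Qed.

Lemma Delta_pos_spec z j q Av : 0 < Av -> 0 < gdir f z j q ->
  ((z 0 q)%:E <= u q)%E -> (l j <= (z 0 j)%:E)%E ->
  let D := Delta f l u z j q Av in let g := gdir f z j q in
  [/\ 0 <= D, ((z 0 q + D * g)%:E <= u q)%E, (l j <= (z 0 j - D * g)%:E)%E
    & D = Av \/ (u q <= (z 0 q + D * g)%:E)%E \/ ((z 0 j - D * g)%:E <= l j)%E].
Proof.
move=> Av_gt0 g_gt0 zq_le lj_le D g.
set a := (u q - (z 0 q)%:E)%E; set b := ((z 0 j)%:E - l j)%E.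
have ab_ge0 : (0 <= Order.min a b)%E by rewrite le_min !sube_ge0 ?zq_le ?lj_le ?orbT.
have DE : D = fine (Order.min (Order.min a b * (g^-1)%:E) Av%:E)%E.
  by rewrite /D /Delta /abar -/g g_gt0.
have [D_ge0 DG_le hit] := fine_min_scale ab_ge0 g_gt0 Av_gt0 DE.
move: DG_le; rewrite le_min => /andP[DG_le_a DG_le_b].
split => //.
- by rewrite EFinD -leeBrDl.
- by rewrite EFinB leeBrDr // -lee_suber_addl.
case: hit => [->|]; first by left.
rewrite ge_min => /orP[a_le|b_le]; right; [left | right].
- by rewrite EFinD -lee_subel_addl.
- by rewrite EFinB leeBlDr // -lee_subel_addl.
Qed.

Lemma armijo0 gamma z v : armijo f gamma z v 0.
Proof. by rewrite /armijo scale0r addr0 mulr0 mul0r addr0. Qed.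

Lemma linesearch_cases gamma delta z v D a : linesearch f gamma delta z v D a ->
  a = D \/ exists m, a = delta * (delta ^+ m * D) /\ ~ armijo f gamma z v (delta ^+ m * D).
Proof.
case=> -[|m] [-> [_ fail]]; first by left; rewrite expr0 mul1r.
by right; exists m; split; [rewrite exprS mulrA | exact: fail].
Qed.

Section OneStep.
Variables (z : 'rV[R]_n) (j q : 'I_n) (Av : R).
Hypothesis Av_gt0 : 0 < Av.
Hypothesis z_in : forall h, (l h <= (z 0 h)%:E <= u h)%E.

Local Notation g := (gdir f z j q).
Local Notation D := (Delta f l u z j q Av).
Local Notation d := (ddir f z j q).

Lemma gdir_neq0_neq : g != 0 -> q != j.
Proof. by apply: contra_neq => ->; rewrite /gdir subrr. Qed.

Lemma step_coord_q a : (z + a *: d) 0 q = z 0 q + a * g.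
Proof.
rewrite step_coord eqxx; have [->|_] := eqVneq q j; last by rewrite subr0 mulr1.
by rewrite /gdir subrr !(mulr0, mul0r, addr0).
Qed.

Lemma step_coord_j a : (z + a *: d) 0 j = z 0 j - a * g.
Proof.
rewrite step_coord eqxx; have [->|_] := eqVneq j q; last by rewrite sub0r mulrN1.
by rewrite /gdir subrr !(mulr0, mul0r, subr0, addr0).
Qed.

Lemma step_coord_other a h : h != q -> h != j -> (z + a *: d) 0 h = z 0 h.
Proof. by move=> /negbTE hq /negbTE hj; rewrite step_coord hq hj subrr mulr0 addr0. Qed.

Lemma Delta_spec : g != 0 ->
  [/\ 0 <= D, (l q <= (z 0 q + D * g)%:E <= u q)%E
    & [\/ D = Av, ~ (l j < (z 0 j - D * g)%:E < u j)%E
        | forall y, (l q <= y%:E <= u q)%E -> g * (y - (z 0 q + D * g)) <= 0]].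
Proof.
case/andP: (z_in q) => lq_le zq_le; case/andP: (z_in j) => lj_le zj_le.
rewrite neq_lt => /orP[g_lt0|g_gt0].
- (* Swapping [j] and [q] flips the sign of [g] and leaves [Delta] unchanged. *)
  have g'_gt0 : 0 < gdir f z q j by rewrite gdir_swap oppr_gt0.
  have [D_ge0 zj'_le lq_le' hit] := Delta_pos_spec Av_gt0 g'_gt0 zj_le lq_le.
  rewrite Delta_swap gdir_swap !mulrN ?opprK in D_ge0 zj'_le lq_le' hit.
  split => //.
    rewrite lq_le' /=; apply: le_trans zq_le; rewrite lee_fin gerDl.
    exact: mulr_ge0_le0 D_ge0 (ltW g_lt0).
  case: hit => [->|[uj_le|lq_ge]]; [exact: Or31 | apply: Or32 | apply: Or33].
    by case/andP => _; rewrite ltNge uj_le.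
  by move=> y /andP[ly _]; rewrite nmulr_rle0 // subr_ge0 -lee_fin (le_trans lq_ge ly).
- have [D_ge0 zq'_le _ hit] := Delta_pos_spec Av_gt0 g_gt0 zq_le lj_le.
  split => //.
    rewrite zq'_le andbT; apply: le_trans lq_le _; rewrite lee_fin lerDl.
    exact: mulr_ge0 D_ge0 (ltW g_gt0).
  case: hit => [->|[uq_le|lj_ge]]; [exact: Or31 | apply: Or33 | apply: Or32].
    by move=> y /andP[_ yu]; rewrite pmulr_rle0 // subr_le0 -lee_fin (le_trans yu uq_le).
  by case/andP; rewrite ltNge lj_ge.
Qed.

Lemma step_in_box gamma delta a : 0 <= delta <= 1 ->
  linesearch f gamma delta z d D a ->
  (l j < ((z + a *: d) 0 j)%:E < u j)%E ->
  forall h, (l h <= ((z + a *: d) 0 h)%:E <= u h)%E.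
Proof.
move=> /andP[delta_ge0 delta_le1] [m [aE _]] zj'_in h.
have [g_eq0|g_neq0] := eqVneq g 0.
  by rewrite /ddir g_eq0 scale0r scaler0 addr0.
have [D_ge0 zq'_in _] := Delta_spec g_neq0.
have [->|hj] := eqVneq h j; first by case/andP: zj'_in => /ltW-> /ltW->.
have [->|hq] := eqVneq h q; last by rewrite step_coord_other.
rewrite step_coord_q aE -mulrA; apply: EFin_between_segment (z_in q) zq'_in.
by rewrite exprn_ge0 ?exprn_ile1.
Qed.

Lemma step_at_bound_or_long gamma delta a Lc : 0 < delta ->
  (forall w, differentiable f w) ->
  (q != j -> lipschitz_along f z (uvec q - uvec j) Lc) ->
  linesearch f gamma delta z d D a ->
  (l j < ((z + a *: d) 0 j)%:E < u j)%E ->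
  [\/ forall y, (l q <= y%:E <= u q)%E -> g * (y - (z + a *: d) 0 q) <= 0,
      a = Av
    | 0 < a /\ 2 * delta * (1 - gamma) < Lc * a].
Proof.
move=> delta_gt0 df hL ls zj'_in.
have [g_eq0|g_neq0] := eqVneq g 0.
  by apply: Or31 => y _; rewrite g_eq0 mul0r.
have [D_ge0 _ hit] := Delta_spec g_neq0.
rewrite step_coord_q; rewrite step_coord_j in zj'_in.
case: (linesearch_cases ls) => [aD|[m [aE fail]]].
  by rewrite aD in zj'_in *; case: hit => [->|/(_ zj'_in)|]; [exact: Or32 | | exact: Or31].
apply: Or33; set t := delta ^+ m * D in aE fail.
have t_gt0 : 0 < t.
  rewrite lt_def (mulr_ge0 (exprn_ge0 _ (ltW delta_gt0)) D_ge0) andbT.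
  by apply/eqP => t_eq0; apply: fail; rewrite t_eq0; exact: armijo0.
have g2_gt0 : 0 < g ^+ 2 by rewrite exprn_even_gt0.
have := armijo_fail_step_lb df (lipschitz_along_scale g (hL (gdir_neq0_neq g_neq0))) t_gt0 fail.
rewrite dot_grad_ddir opprK aE => lb.
by split; [exact: mulr_gt0 | nra].
Qed.

Lemma AC2CD_step_bound gamma delta a Lc Al Lm y : 0 < gamma < 1 -> 0 < delta ->
  0 < Al -> Al <= Av -> Lc <= Lm ->
  (forall w, differentiable f w) ->
  (q != j -> lipschitz_along f z (uvec q - uvec j) Lc) ->
  linesearch f gamma delta z d D a ->
  (l j < ((z + a *: d) 0 j)%:E < u j)%E ->
  (l q <= y%:E <= u q)%E ->
  g * (y - (z + a *: d) 0 q)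
    <= Num.max Al^-1 (Lm / (2 * delta * (1 - gamma)))
       * `|(z + a *: d) 0 q - z 0 q| * `|y - (z + a *: d) 0 q|.
Proof.
move=> /andP[gamma_gt0 gamma_lt1] delta_gt0 Al_gt0 Al_le Lc_le df hL ls zj'_in y_in.
set M := Num.max _ _; set X := y - _.
have M_geAl : Al^-1 <= M by rewrite le_max lexx.
have M_geL : Lm / (2 * delta * (1 - gamma)) <= M by rewrite le_max lexx orbT.
have M_ge0 : 0 <= M by apply: le_trans M_geAl; rewrite invr_ge0 ltW.
suff [gX_le0|Ma_ge1] : g * X <= 0 \/ 1 <= M * `|a|.
- by apply: le_trans gX_le0 _; rewrite !mulr_ge0.
- rewrite step_coord_q addrC addKr normrM mulrA.
  apply: le_trans (ler_norm _) _; rewrite normrM ler_wpM2r //.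
  exact: ler_peMl.
case: (step_at_bound_or_long delta_gt0 df hL ls zj'_in) => [hit|aAv|[a_gt0 lb]].
- by left; exact: hit.
- right; rewrite aAv gtr0_norm ?(lt_le_trans Al_gt0) //.
  apply: le_trans (ler_wpM2r (ltW (lt_le_trans Al_gt0 Al_le)) M_geAl).
  by rewrite ler_pdivlMl // mulr1.
- right; rewrite gtr0_norm //.
  have c_gt0 : 0 < 2 * delta * (1 - gamma) by rewrite !mulr_gt0 // subr_gt0.
  apply: le_trans (ler_wpM2r (ltW a_gt0) M_geL).
  rewrite mulrAC ler_pdivlMr // mul1r.
  exact: le_trans (ltW lb) (ler_wpM2r (ltW a_gt0) Lc_le).
Qed.

End OneStep.

End Step.

Lemma AC2CD_run_in_box (R : realType) (n : nat) (f : 'rV[R]_n -> R) (b : R)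
    (l u : 'I_n -> \bar R) (tau gamma delta Al Au : R)
    (x : nat -> 'rV[R]_n) (jk : nat -> 'I_n) (p : nat -> {perm 'I_n})
    (A alpha : nat -> nat -> R) (z : nat -> nat -> 'rV[R]_n) :
  0 < delta < 1 -> 0 < Al -> feasible l u b (x 0%N) ->
  AC2CD_run f l u tau gamma delta Al Au x jk p A alpha z ->
  (forall k i, (i <= n)%N -> (l (jk k) < (z k i 0 (jk k))%:E < u (jk k))%E) ->
  forall k i, (i <= n)%N -> forall h, (l h <= (z k i 0 h)%:E <= u h)%E.
Proof.
move=> /andP[delta_gt0 delta_lt1] Al_gt0 [_ x0_in] [z0 [xS [_ [A_in [ls step]]]]] zj_in.
have inner k : (forall h, (l h <= (x k 0 h)%:E <= u h)%E) ->
    forall i, (i <= n)%N -> forall h, (l h <= (z k i 0 h)%:E <= u h)%E.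
  move=> xk_in; elim=> [_|i IHi] i_lt; first by rewrite z0.
  have /andP[Al_le _] := A_in k (Ordinal i_lt).
  rewrite [z k i.+1](step k (Ordinal i_lt)).
  apply: step_in_box (ls k (Ordinal i_lt)) _.
  - exact: lt_le_trans Al_le.
  - exact: IHi (ltnW i_lt).
  - by rewrite !ltW.
  - by rewrite -(step k (Ordinal i_lt)); exact: zj_in.
elim=> [|k IHk]; apply: inner => // h; rewrite xS; exact: IHk.
Qed.

Theorem lemma5 (R : realType) (n : nat) (f : 'rV[R]_n -> R) (b : R)
  (l u : 'I_n -> \bar R) (L : 'I_n -> 'I_n -> R)
  (tau gamma delta Al Au : R)
  (x : nat -> 'rV[R]_n) (jk : nat -> 'I_n) (p : nat -> {perm 'I_n})
  (A : nat -> nat -> R) (alpha : nat -> nat -> R)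
  (z : nat -> nat -> 'rV[R]_n) :
  (2 <= n)%N ->
  (* bounds: l_i in R U {-oo}, u_i in R U {+oo}, l_i < u_i *)
  (forall i, l i != +oo%E) -> (forall i, u i != -oo%E) ->
  (forall i, (l i < u i)%E) ->
  (* f continuously differentiable with Lipschitz gradient *)
  (forall y : 'rV[R]_n, differentiable f y) ->
  continuous (grad f) ->
  (exists Lg : R, forall y w : 'rV[R]_n,
      `|grad f y - grad f w| <= Lg * `|y - w|) ->
  (* the constants L_{i,j} *)
  (forall i j, i != j -> 0 < L i j) ->
  (forall i, L i i = 0) ->
  (forall (i j : 'I_n) (y : 'rV[R]_n) (s t : R),
      i != j ->
      `|dot (grad f (y + s *: (uvec i - uvec j))) (uvec i - uvec j)
        - dot (grad f (y + t *: (uvec i - uvec j))) (uvec i - uvec j)|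
        <= L i j * `|s - t|) ->
  (* parameters *)
  0 < tau <= 1 -> 0 < gamma < 1 -> 0 < delta < 1 -> 0 < Al -> Al <= Au ->
  (* starting point and standing assumptions *)
  feasible l u b (x 0%N) ->
  let L0 : set 'rV[R]_n := fun y => feasible l u b y /\ f y <= f (x 0%N) in
  (exists y, L0 y) -> compact L0 ->
  (forall y, L0 y -> exists i, (l i < (y 0 i)%:E < u i)%E) ->
  (* the run of AC2CD, with the additional requirement on A^{k,i} *)
  AC2CD_run f l u tau gamma delta Al Au x jk p A alpha z ->
  (forall k (i : nat), (i <= n)%N ->
      (l (jk k) < (z k i 0 (jk k))%:E < u (jk k))%E) ->
  let Lmax := \big[Num.max/0]_(i < n) \big[Num.max/0]_(j < n) L i j in
  forall xs : 'rV[R]_n, stationary f l u b xs ->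
  forall (k : nat) (i : 'I_n),
    let q := p k i in
    gdir f (z k i) (jk k) q * (xs 0 q - z k i.+1 0 q)
      <= Num.max (Al^-1) (Lmax / (2 * delta * (1 - gamma)))
         * `|z k i.+1 0 q - z k i 0 q| * `|xs 0 q - z k i.+1 0 q|.
Proof.
move=> _ _ _ _ df _ _ _ _ hL _ gamma01 delta01 Al_gt0 _ x0_feas L0 _ _ _ run zj_in
  Lmax xs [[_ xs_in] _] k i; cbv zeta.
have z_in := AC2CD_run_in_box delta01 Al_gt0 x0_feas run zj_in.
case: run => [_ [_ [_ [A_in [ls step]]]]].
have /andP[Al_le _] := A_in k i.
have L_le : L (p k i) (jk k) <= Lmax.
  exact: le_trans (le_bigmax _ _ (jk k)) (le_bigmax _ _ (p k i)).
rewrite step; apply: AC2CD_step_bound L_le df _ (ls k i) _ (xs_in (p k i)) => //.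
- exact: lt_le_trans Al_le.
- exact/z_in/ltnW.
- by case/andP: delta01.
- by move=> qj s t; exact: hL.
- by rewrite -step; exact: zj_in.
Qed.
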